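(* Let $p$ be a prime with $p\equiv 1\pmod 6$. Then there exists a Latin square $L$ of order $p$ that is orthogonal to $B_p$ and contains an intercalate.
   Context: $B_p$ is the Latin square of order $p$ with symbol $i+j\pmod p$ in cell $(i,j)$, $i,j\in\mathbb{Z}_p$. Two Latin squares of order $p$ are orthogonal if superimposing them yields each of the $p^2$ ordered pairs of symbols exactly once. An intercalate in a Latin square $L$ is a $2\times 2$ subsquare: rows $r_1\neq r_2$ and columns $c_1\neq c_2$ such that $L(r_1,c_1)=L(r_2,c_2)$ and $L(r_1,c_2)=L(r_2,c_1)$. *)

From mathcomp Require Import all_boot.
Set Implicit Arguments. Unset Strict Implicit. Unset Printing Implicit Defensive.

Definition square (n : nat) := 'I_n -> 'I_n -> 'I_n.

Definition latin (n : nat) (L : square n) : Prop :=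
  (forall i : 'I_n, injective (L i)) /\
  (forall j : 'I_n, injective (fun i => L i j)).

(* Orthogonality: superimposing yields each ordered pair exactly once, i.e. the
   map (i,j) |-> (L i j, M i j) is injective on the n^2 cells (hence bijective
   onto the n^2 ordered pairs). *)
Definition orthogonal (n : nat) (L M : square n) : Prop :=
  forall i1 j1 i2 j2 : 'I_n,
    L i1 j1 = L i2 j2 -> M i1 j1 = M i2 j2 -> i1 = i2 /\ j1 = j2.

Definition Bsq (p : nat) (Hp : 0 < p) : square p :=
  fun i j => Ordinal (ltn_pmod (i + j) Hp).

Definition has_intercalate (n : nat) (L : square n) : Prop :=
  exists r1 r2 c1 c2 : 'I_n,
    r1 != r2 /\ c1 != c2 /\ L r1 c1 = L r2 c2 /\ L r1 c2 = L r2 c1.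

(* Over a field with a primitive cube root of unity w, the map
   F u = w^2 u on cube roots of unity and F u = w u elsewhere is a complete
   mapping: both F and u |-> u + F u are injective, because multiplying by a
   cube root of unity preserves the set of cube roots of unity.  The table
   L(x, y) = x + F(x + y) is then a Latin square orthogonal to the addition
   table, and the rows 0, w - 1 and columns 1, w^2 form an intercalate.  For
   p = 1 (mod 3), 'F_p has such a w by Cauchy's theorem in its unit group. *)
From mathcomp Require Import all_boot ssralg zmodp finalg fingroup pgroup.
From mathcomp Require Import ring zify.
Set Implicit Arguments. Unset Strict Implicit. Unset Printing Implicit Defensive.
Import GRing.Theory FinRing.Theory.

Section SquareOf.

Variables (n : nat) (V : eqType) (f : 'I_n -> V) (g : V -> 'I_n).
Hypotheses (fK : cancel f g) (gK : cancel g f).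

Definition square_of (M : V -> V -> V) : square n := fun i j => g (M (f i) (f j)).

Lemma latin_square_of (M : V -> V -> V) :
  (forall x, injective (M x)) -> (forall y, injective (M^~ y)) ->
  latin (square_of M).
Proof.
move=> Mrow Mcol; split=> [i j1 j2 | j i1 i2] /(can_inj gK).
  by move/Mrow/(can_inj fK).
by move/Mcol/(can_inj fK).
Qed.

Lemma orthogonal_square_of (M N : V -> V -> V) (B : square n) :
  (forall i j, f (B i j) = N (f i) (f j)) ->
  (forall x1 y1 x2 y2, M x1 y1 = M x2 y2 -> N x1 y1 = N x2 y2 ->
     x1 = x2 /\ y1 = y2) ->
  orthogonal (square_of M) B.
Proof.
move=> fB MN i1 j1 i2 j2 /(can_inj gK) eM /(congr1 f); rewrite !fB => eN.
by have [/(can_inj fK) -> /(can_inj fK) ->] := MN _ _ _ _ eM eN.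
Qed.

Lemma intercalate_square_of (M : V -> V -> V) :
  (exists x1 x2 y1 y2, [/\ x1 != x2, y1 != y2,
     M x1 y1 = M x2 y2 & M x1 y2 = M x2 y1]) ->
  has_intercalate (square_of M).
Proof.
move=> [x1 [x2 [y1 [y2 [nx ny e1 e2]]]]].
exists (g x1), (g x2), (g y1), (g y2).
by rewrite !(inj_eq (can_inj gK)) /square_of !gK e1 e2.
Qed.

End SquareOf.

Local Open Scope ring_scope.

Section CompleteMapping.

Variables (V : zmodType) (F : V -> V).

Definition complete_mapping := injective F /\ injective (fun x => x + F x).

Definition complete_mapping_table (x y : V) := x + F (x + y).

Lemma complete_mapping_table_row_inj x :
  injective F -> injective (complete_mapping_table x).
Proof. by move=> Finj y1 y2 /addrI /Finj /addrI. Qed.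

Lemma complete_mapping_table_col_inj y :
  injective (fun x => x + F x) -> injective (complete_mapping_table^~ y).
Proof.
rewrite /complete_mapping_table => Ginj x1 x2 e.
by apply/(addIr y)/Ginj; rewrite /= !(addrAC _ y) e.
Qed.

Lemma complete_mapping_table_orthogonal_add x1 y1 x2 y2 :
  complete_mapping_table x1 y1 = complete_mapping_table x2 y2 ->
  x1 + y1 = x2 + y2 -> x1 = x2 /\ y1 = y2.
Proof.
rewrite /complete_mapping_table => eL es; move: eL; rewrite es => /addIr ex.
by split=> //; move: es; rewrite ex => /addrI.
Qed.

End CompleteMapping.

Section CubeRootTwist.

Variable K : fieldType.

Definition twist (a b u : K) := if u ^+ 3 == 1 then a * u else b * u.

Lemma twist_inj a b :
  a != 0 -> b != 0 -> (a / b) ^+ 3 = 1 -> injective (twist a b).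
Proof.
move=> a0 b0 ab3.
have cube_ab u v : u ^+ 3 = 1 -> b * v = a * u -> v ^+ 3 = 1.
  move=> u3 e; have -> : v = a / b * u by apply: (mulfI b0); rewrite e; field.
  by rewrite exprMn ab3 u3 mulr1.
rewrite /twist => u v.
case: (eqVneq (u ^+ 3) 1) => u3; case: (eqVneq (v ^+ 3) 1) => v3.
- exact: mulfI.
- by move/esym/(cube_ab _ _ u3)/eqP; rewrite (negPf v3).
- by move/(cube_ab _ _ v3)/eqP; rewrite (negPf u3).
- exact: mulfI.
Qed.

Lemma addr_twist a b u : u + twist a b u = twist (1 + a) (1 + b) u.
Proof. by rewrite /twist; case: ifP => _; rewrite mulrDl mul1r. Qed.

Variable w : K.
Hypotheses (w3 : w ^+ 3 = 1) (w_neq1 : w != 1).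

Lemma cube_root1_neq0 : w != 0.
Proof. by apply: contra_eq_neq w3 => ->; rewrite expr0n eq_sym oner_eq0. Qed.

Lemma sqr_cube_root1 : (w ^+ 2) ^+ 3 = 1.
Proof. by rewrite -exprM mulnC exprM w3 expr1n. Qed.

Lemma sqr_cube_root1_neq1 : w ^+ 2 != 1.
Proof. by apply: contraNneq w_neq1 => w2; rewrite -w3 exprSr w2 mul1r. Qed.

Lemma cube_root1_sum : w ^+ 2 + w + 1 = 0.
Proof.
have : (w - 1) * (w ^+ 2 + w + 1) = w ^+ 3 - 1 by ring.
rewrite w3 subrr => /eqP; rewrite mulf_eq0 subr_eq0 (negPf w_neq1).
by move/eqP.
Qed.

(* At -2 both factors of X^3 - 1 = (X - 1)(X^2 + X + 1) vanish only when
   3 = 0, and then w^2 + w + 1 = (w - 1)^2 forces w = 1. *)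
Lemma opp2_not_cube_root1 : (-2 : K) ^+ 3 != 1.
Proof.
apply: contraNneq w_neq1 => m2.
have three0 : 3%:R = 0 :> K.
  have : (3%:R : K) * 3%:R = 1 - (-2) ^+ 3 by ring.
  by rewrite m2 subrr => /eqP; rewrite mulf_eq0 orbb => /eqP.
have : (w - 1) ^+ 2 = w ^+ 2 + w + 1 - w * 3%:R by ring.
rewrite cube_root1_sum three0 mulr0 subrr => /eqP.
by rewrite expf_eq0 subr_eq0 => /andP[].
Qed.

Lemma twist_complete : complete_mapping (twist (w ^+ 2) w).
Proof.
have w0 := cube_root1_neq0.
have w20 : w ^+ 2 != 0 by rewrite expf_neq0.
split=> [|u v /=].
  by apply: twist_inj; rewrite // expr_div_n sqr_cube_root1 w3 divr1.
rewrite !addr_twist.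
have -> : 1 + w ^+ 2 = - w by rewrite -[RHS]addr0 -cube_root1_sum; ring.
have -> : 1 + w = - w ^+ 2 by rewrite -[RHS]addr0 -cube_root1_sum; ring.
apply: twist_inj; rewrite ?oppr_eq0 //.
by rewrite invrN mulrNN expr_div_n sqr_cube_root1 w3 divr1.
Qed.

Lemma twist_table_intercalate :
  exists x1 x2 y1 y2, [/\ x1 != x2, y1 != y2,
    complete_mapping_table (twist (w ^+ 2) w) x1 y1 =
      complete_mapping_table (twist (w ^+ 2) w) x2 y2 &
    complete_mapping_table (twist (w ^+ 2) w) x1 y2 =
      complete_mapping_table (twist (w ^+ 2) w) x2 y1].
Proof.
exists 0, (w - 1), 1, (w ^+ 2); split.
- by rewrite eq_sym subr_eq0.
- by rewrite eq_sym sqr_cube_root1_neq1.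
- rewrite /complete_mapping_table.
  have -> : w - 1 + w ^+ 2 = -2 by rewrite -[RHS]addr0 -cube_root1_sum; ring.
  rewrite /twist !add0r expr1n eqxx (negPf opp2_not_cube_root1).
  by rewrite -[RHS]addr0 -cube_root1_sum; ring.
- rewrite /complete_mapping_table /twist !add0r subrK w3 sqr_cube_root1 !eqxx.
  have w4 : w ^+ 2 * w ^+ 2 = w by rewrite -exprD -[RHS]mul1r -w3 -exprSr.
  by rewrite w4 -exprSr w3 subrK.
Qed.

End CubeRootTwist.

Lemma finField_cube_root1 (K : finFieldType) :
  (3 %| #|K|.-1)%N -> exists w : K, w ^+ 3 = 1 /\ w != 1.
Proof.
rewrite -card_finField_unit => d3.
have [x _ ox] := Cauchy (isT : prime 3) d3.
exists (val x); split; first by rewrite -val_unitX -ox expg_order.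
apply: contra_eq_neq ox => x1; suff -> : x = 1%g by rewrite order1.
exact: val_inj.
Qed.

Section OrdinalsAsFp.

Variables (p : nat) (Hp : prime p).

Definition Fp_of_ord (i : 'I_p) : 'F_p := (i : nat)%:R.

Lemma ord_of_Fp_subproof (x : 'F_p) : (x < p)%N.
Proof. by rewrite -{2}(Fp_cast Hp). Qed.

Definition ord_of_Fp (x : 'F_p) : 'I_p := Ordinal (ord_of_Fp_subproof x).

Lemma Fp_of_ordK : cancel Fp_of_ord ord_of_Fp.
Proof. by move=> i; apply: val_inj; rewrite /= val_Fp_nat // modn_small. Qed.

Lemma ord_of_FpK : cancel ord_of_Fp Fp_of_ord.
Proof.
by move=> x; apply: val_inj; rewrite /Fp_of_ord /= val_Fp_nat // modn_small
  // ord_of_Fp_subproof.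
Qed.

Lemma Fp_of_ord_Bsq i j :
  Fp_of_ord (Bsq (prime_gt0 Hp) i j) = Fp_of_ord i + Fp_of_ord j.
Proof. by rewrite /Fp_of_ord /Bsq /= Fp_nat_mod // natrD. Qed.

End OrdinalsAsFp.

Lemma Fp_cube_root1 (p : nat) : prime p -> p = 1 %[mod 3] ->
  exists w : 'F_p, w ^+ 3 = 1 /\ w != 1.
Proof.
move=> Hp /= Hmod; apply: finField_cube_root1.
rewrite card_Fp //; have := prime_gt0 Hp; have := divn_eq p 3; lia.
Qed.

Theorem theorem7p1 (p : nat) (Hprime : prime p) (Hmod : p = 1 %[mod 6]) :
  exists L : square p,
    latin L /\ orthogonal L (Bsq (prime_gt0 Hprime)) /\ has_intercalate L.
Proof.
have Hmod3 : p = 1 %[mod 3] by rewrite -(modn_dvdm p (isT : 3 %| 6)) Hmod.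
have [w [w3 w_neq1]] := Fp_cube_root1 Hprime Hmod3.
have fK := Fp_of_ordK Hprime; have gK := ord_of_FpK Hprime.
pose T := complete_mapping_table (twist (w ^+ 2) w).
exists (square_of (@Fp_of_ord p) (ord_of_Fp Hprime) T); split; [|split].
- have [Finj Ginj] := twist_complete w3 w_neq1.
  apply: latin_square_of => // [x|y].
    exact: complete_mapping_table_row_inj.
  exact: complete_mapping_table_col_inj.
- apply: (orthogonal_square_of fK gK (N := +%R)) => [i j|].
    exact: Fp_of_ord_Bsq.
  exact: complete_mapping_table_orthogonal_add.
- exact: (intercalate_square_of gK (twist_table_intercalate w3 w_neq1)).
Qed.
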